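(* Let $n\ge 1$, $h=1/(2n)$. Consider a fine grid on $\Omega^f=[0,1]\times[0,1]$ with points $(x^f_i,y^f_j)=((i-1)h,(j-1)h)$, $i=1,\dots,2n$ (periodic in $x$), where the row $j=1$ lies on the interface $\Gamma=\{y=0\}$ and $j=0$ is a row of ghost points; and a coarse grid on $\Omega^c=[0,1]\times[-1,0]$ with points $(x^c_i,y^c_j)=(2(i-1)h,2(j-n)h)$, $i=1,\dots,n$ (periodic in $x$), where the row $j=n$ lies on $\Gamma$ and $j=n+1$ is a row of ghost points. Let $(\cdot,\cdot)_h$ and $(\cdot,\cdot)_{2h}$ be the weighted inner products for grid functions (without ghost points) on the fine and coarse grids, $(\boldsymbol u,\boldsymbol v)_h=h^2\sum_{i}\sum_{j} w^f_j u_{ij}v_{ij}$, $(\boldsymbol u,\boldsymbol v)_{2h}=(2h)^2\sum_i\sum_j w^c_j u_{ij}v_{ij}$ with weights $w^f_j,w^c_j>0$, and let the interface inner products be $\langle \boldsymbol u_\Gamma,\boldsymbol v_\Gamma\rangle_h=h\sum_{i=1}^{2n}u_iv_i$ on the fine interface and $\langle \boldsymbol u_\Gamma,\boldsymbol v_\Gamma\rangle_{2h}=2h\sum_{i=1}^{n}u_iv_i$ on the coarse interface. For a grid function $\boldsymbol u$, $\boldsymbol u_\Gamma$ denotes its restriction to the interface row. Assume linear difference operators $\widetilde G_f(\mu)$ (acting on fine grid functions $\widetilde{\boldsymbol v}$ including ghost points, with values at the non-ghost fine grid points) and $\widetilde G_c(\mu)$ (analogously on the coarse grid), and linear maps $\widetilde{\boldsymbol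 v}\mapsto \widetilde{\boldsymbol v}'_\Gamma$ producing interface grid functions (of length $2n$ on the fine side and $n$ on the coarse side), satisfying the summation-by-parts identities $(\boldsymbol u,\widetilde G_f(\mu)\widetilde{\boldsymbol v})_h=-S_f(\boldsymbol u,\boldsymbol v)-\langle \boldsymbol u_\Gamma,\widetilde{\boldsymbol v}'_\Gamma\rangle_h$ for all fine grid functions $\boldsymbol u$ and $\widetilde{\boldsymbol v}$ (with $\boldsymbol v$ the restriction of $\widetilde{\boldsymbol v}$ to non-ghost points), and $(\boldsymbol u,\widetilde G_c(\mu)\widetilde{\boldsymbol v})_{2h}=-S_c(\boldsymbol u,\boldsymbol v)+\langle \boldsymbol u_\Gamma,\widetilde{\boldsymbol v}'_\Gamma\rangle_{2h}$ for all coarse grid functions, where $S_f$ and $S_c$ are symmetric positive semi-definite bilinear forms. Let $\boldsymbol{\rho}^f,\boldsymbol{\rho}^c$ be diagonal matrices with positive diagonal entries, let $\mathcal P$ be a linear (interpolation) map from coarse interface grid functions ($\mathbb R^n$) to fine interface grid functions ($\mathbb R^{2n}$), and $\mathcal R$ a linear (restriction) map from $\mathbb R^{2n}$ to $\mathbb R^n$. Consider smooth time-dependent grid functions $\widetilde{\boldsymbol f}(t)$, $\widetilde{\boldsymbol c}(t)$ satisfying the semi-discretization $\boldsymbol{\rho}^f\boldsymbol f_{tt}=\widetilde G_f(\mu)\widetilde{\boldsymbol f}$, $\boldsymbol{\rho}^c\boldsymbol c_{tt}=\widetilde G_c(\mu)\widetilde{\boldsymbol c}$, together with the interface conditions $\boldsymbol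 f_\Gamma=\mathcal P\boldsymbol c_\Gamma$ and $\widetilde{\boldsymbol c}'_\Gamma=\mathcal R\widetilde{\boldsymbol f}'_\Gamma$ for all $t$. If the interpolation and restriction operators are compatible in the sense $\mathcal P=2\mathcal R^T$ (as matrices), then $\frac{d}{dt}\left[(\boldsymbol f_t,\boldsymbol{\rho}^f\boldsymbol f_t)_h+S_f(\boldsymbol f,\boldsymbol f)+(\boldsymbol c_t,\boldsymbol{\rho}^c\boldsymbol c_t)_{2h}+S_c(\boldsymbol c,\boldsymbol c)\right]=0.$
   Context: This is a semi-discretization of the acoustic wave equation $\rho F_{tt}=\nabla\cdot(\mu\nabla F)$ on a fine domain and $\rho C_{tt}=\nabla\cdot(\mu\nabla C)$ on a coarse domain, coupled by continuity of the solution and of the normal flux $\mu\,\partial_y$ across the interface $y=0$, with a 1:2 mesh refinement and periodic boundary conditions in $x$; contributions from the outer boundaries ($y=1$, $y=-1$) are not included, as encoded in the assumed summation-by-parts identities. Tilde denotes grid functions/operators that involve ghost points; $\boldsymbol f,\boldsymbol c$ denote the restrictions of $\widetilde{\boldsymbol f},\widetilde{\boldsymbol c}$ to the non-ghost grid points. In the paper, $\widetilde{\boldsymbol v}'_\Gamma$ has $i$-th entry $\mu_{i,1}\widetilde{\boldsymbol b}_1^T\widetilde{\boldsymbol v}_{i,:}$, a boundary difference approximation of $\mu\,\partial v/\partial y$ at the interface using the ghost point. *)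

From HB Require Import structures.
From mathcomp Require Import all_boot all_order all_algebra.
From mathcomp Require Import all_classical all_reals all_analysis.
Set Implicit Arguments. Unset Strict Implicit. Unset Printing Implicit Defensive.
Import Order.TTheory GRing.Theory Num.Theory.
Import numFieldNormedType.Exports.
Local Open Scope ring_scope.

(* Grid functions are matrices indexed (x-index i, y-index j).
   Fine grid, x-index i : 'I_(2n) (i=1..2n in the paper, periodic).
   - fine with ghost row:   'M_(2n, 2n+2), column k <-> paper row j = k
       (column 0 = ghost row j = 0, column 1 = interface row j = 1)
   - fine non-ghost:        'M_(2n, 2n+1), column k <-> paper row j = k+1
       (column 0 = interface row j = 1)
   Coarse grid, x-index i : 'I_n.
   - coarse with ghost row: 'M_(n, n+2), column k <-> paper row j = k
       (column n = interface row, column n+1 = ghost row)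
   - coarse non-ghost:      'M_(n, n+1), column k <-> paper row j = k
       (column n = interface row) *)

Section Grid.
Variable R : realType.
Variable n : nat.

Definition fineT := 'M[R]_(2 * n, (2 * n).+2).
Definition fineG := 'M[R]_(2 * n, (2 * n).+1).
Definition coarseT := 'M[R]_(n, n.+2).
Definition coarseG := 'M[R]_(n, n.+1).

Definition resf (v : fineT) : fineG := \matrix_(i, k) v i (lift ord0 k).
Definition resc (v : coarseT) : coarseG :=
  \matrix_(i, k) v i (widen_ord (leqnSn _) k).

Definition gammaf (u : fineG) : 'cV[R]_(2 * n) := \col_i u i ord0.
Definition gammac (u : coarseG) : 'cV[R]_n := \col_i u i ord_max.

Definition hh : R := ((2 * n)%:R)^-1.

Definition ipf (wf : 'I_(2 * n).+1 -> R) (u v : fineG) : R :=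
  hh ^+ 2 * \sum_i \sum_j wf j * u i j * v i j.
Definition ipc (wc : 'I_n.+1 -> R) (u v : coarseG) : R :=
  (2 * hh) ^+ 2 * \sum_i \sum_j wc j * u i j * v i j.

Definition ipGf (u v : 'cV[R]_(2 * n)) : R := hh * \sum_i u i 0 * v i 0.
Definition ipGc (u v : 'cV[R]_n) : R := (2 * hh) * \sum_i u i 0 * v i 0.

End Grid.

(* action of a diagonal matrix, given by its diagonal d (a grid function) *)
Definition diagact (R : realType) p q (d u : 'M[R]_(p, q)) : 'M[R]_(p, q) :=
  \matrix_(i, j) (d i j * u i j).

Definition dmx (R : realType) p q (F : R -> 'M[R]_(p, q)) (t : R) : 'M[R]_(p, q) :=
  \matrix_(i, j) derive1 (fun s => F s i j) t.

Definition sym_psd_bilinear (R : realType) (V : lmodType R) (S : V -> V -> R) :=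
  [/\ forall (a : R) (u v w : V), S (a *: u + v) w = a * S u w + S v w,
      forall u v, S u v = S v u
    & forall u, 0 <= S u u].

Definition twice_diff (R : realType) p q (F : R -> 'M[R]_(p, q)) :=
  forall (i : 'I_p) (j : 'I_q) (t : R),
    derivable (fun s => F s i j) t 1 /\
    derivable (fun s => derive1 (fun s => F s i j) s) t 1.

From HB Require Import structures.
From mathcomp Require Import all_boot all_order all_algebra.
From mathcomp Require Import all_classical all_reals all_analysis.
From mathcomp Require Import ring.
Set Implicit Arguments. Unset Strict Implicit. Unset Printing Implicit Defensive.
Import Order.TTheory GRing.Theory Num.Theory.
Import numFieldNormedType.Exports.
Local Open Scope ring_scope.

(* The energy is a sum of four quadratic forms B(M, M) with B symmetric
   bilinear, so its rate is 2 (B(f_t, f_tt) + S_f(f, f_t) + ...).  Inserting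
   the semi-discrete equations and the summation-by-parts identities cancels
   the S-terms and leaves the two interface fluxes
   -<(f_t)_Γ, f~'_Γ>_h and <(c_t)_Γ, c~'_Γ>_2h.  Differentiating f_Γ = P c_Γ
   and using c~'_Γ = R f~'_Γ, these fluxes cancel because P = 2 R^T is the
   adjoint of R for the interface inner products, whose weights are h and 2h. *)

Section EntrywiseDerivatives.
Variable R : realType.

Lemma is_derive_sum_fun n (h : 'I_n -> R -> R) (t : R) (dh : 'I_n -> R) :
  (forall i, is_derive t 1 (h i) (dh i)) ->
  is_derive t 1 (fun s => \sum_i h i s) (\sum_i dh i).
Proof.
move=> dh_h; rewrite (_ : (fun s => _) = \sum_i h i); last first.
  by apply/funext => s; rewrite fct_sumE.
exact: is_derive_sum.
Qed.

Lemma is_derive_mul_fun (f g : R -> R) (t df dg : R) :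
  is_derive t 1 f df -> is_derive t 1 g dg ->
  is_derive t 1 (fun s => f s * g s) (df * g t + f t * dg).
Proof.
move=> df_f dg_g; have := is_deriveM df_f dg_g.
by rewrite /GRing.scale /= addrC [g t * _]mulrC.
Qed.

Lemma twice_diff_reindex p q q' (F : R -> 'M[R]_(p, q))
    (G : R -> 'M[R]_(p, q')) (g : 'I_q' -> 'I_q) :
  (forall s i j, G s i j = F s i (g j)) -> twice_diff F -> twice_diff G.
Proof.
move=> GF F2 i j t; rewrite (_ : (fun s => G s i j) = fun s => F s i (g j)).
  exact: F2.
by apply/funext => s; rewrite GF.
Qed.

Lemma twice_diff_resf n (F : R -> fineT R n) :
  twice_diff F -> twice_diff (fun s => resf (F s)).
Proof. by apply: twice_diff_reindex => s i j; rewrite mxE. Qed.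

Lemma twice_diff_resc n (F : R -> coarseT R n) :
  twice_diff F -> twice_diff (fun s => resc (F s)).
Proof. by apply: twice_diff_reindex => s i j; rewrite mxE. Qed.

Lemma twice_diff_col p q (F : R -> 'M[R]_(p, q)) (j : 'I_q) :
  twice_diff F -> twice_diff (fun s => \col_i F s i j).
Proof. by apply: (twice_diff_reindex (g := fun=> j)) => s i k; rewrite mxE. Qed.

Lemma twice_diff_is_derive p q (F : R -> 'M[R]_(p, q)) :
  twice_diff F ->
  forall (t : R) i j, is_derive t 1 (fun s => F s i j) (dmx F t i j).
Proof.
by move=> F2 t i j; rewrite mxE derive1E; apply/derivableP; case: (F2 i j t).
Qed.

Lemma twice_diff_is_derive_dmx p q (F : R -> 'M[R]_(p, q)) :
  twice_diff F ->
  forall (t : R) i j, is_derive t 1 (fun s => dmx F s i j) (dmx (dmx F) t i j).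
Proof.
move=> F2 t i j; rewrite [dmx (dmx F) t i j]mxE.
rewrite (_ : (fun s => dmx F s i j) = derive1 (fun s => F s i j)); last first.
  by apply/funext => s; rewrite mxE.
by rewrite derive1E; apply/derivableP; case: (F2 i j t).
Qed.

Lemma dmx_col p q (F : R -> 'M[R]_(p, q)) (j : 'I_q) (t : R) :
  dmx (fun s => \col_i F s i j) t = \col_i dmx F t i j.
Proof.
apply/matrixP => i k; rewrite !mxE.
by congr derive1; apply/funext => s; rewrite mxE.
Qed.

Lemma dmx_mulmx m p q (A : 'M[R]_(m, p)) (F : R -> 'M[R]_(p, q)) (t : R) :
  (forall i j, derivable (fun s => F s i j) t 1) ->
  dmx (fun s => A *m F s) t = A *m dmx F t.
Proof.
move=> dF; apply/matrixP => i j; rewrite !mxE derive1E.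
have dAF : is_derive t 1 (fun s => \sum_k A i k * F s k j)
    (\sum_k A i k * dmx F t k j).
  apply: is_derive_sum_fun => k; rewrite mxE derive1E.
  exact/is_deriveZ/derivableP.
rewrite (_ : (fun s => _) = fun s => \sum_k A i k * F s k j) ?derive_val //.
by apply/funext => s; rewrite mxE.
Qed.

Lemma dmx_interface n (P : 'M[R]_(2 * n, n)) (F : R -> fineG R n)
    (G : R -> coarseG R n) (t : R) :
  (forall s, gammaf (F s) = P *m gammac (G s)) -> twice_diff G ->
  gammaf (dmx F t) = P *m gammac (dmx G t).
Proof.
move=> FG G2.
have -> : gammaf (dmx F t) = dmx (fun s => gammaf (F s)) t :=
  esym (dmx_col F ord0 t).
rewrite (funext FG) dmx_mulmx ?dmx_col // => i j.
by case: (twice_diff_col ord_max G2 i j t).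
Qed.

End EntrywiseDerivatives.

Section QuadraticFormDerivative.
Variables (R : realType) (p q : nat) (B : 'M[R]_(p, q) -> 'M[R]_(p, q) -> R).
Hypothesis B_linear : forall a u v w, B (a *: u + v) w = a * B u w + B v w.
Hypothesis B_sym : forall u v, B u v = B v u.

Lemma form0l w : B 0 w = 0.
Proof.
have := B_linear 1 0 0 w; rewrite scaler0 addr0 mul1r.
by rewrite -{1}[B 0 w]addr0 => /addrI <-.
Qed.

Lemma formZl a u w : B (a *: u) w = a * B u w.
Proof. by rewrite -[a *: u]addr0 B_linear form0l addr0. Qed.

Lemma form_suml I (r : seq I) (P : pred I) (F : I -> 'M[R]_(p, q)) w :
  B (\sum_(i <- r | P i) F i) w = \sum_(i <- r | P i) B (F i) w.
Proof.
elim/big_rec2: _ => [|i x u _ <-]; first exact: form0l.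
by have := B_linear 1 (F i) u w; rewrite scale1r mul1r.
Qed.

Lemma form_expandl u v :
  B u v = \sum_i \sum_j u i j * B (delta_mx i j) v.
Proof.
rewrite {1}(matrix_sum_delta u) form_suml; apply: eq_bigr => i _.
by rewrite form_suml; apply: eq_bigr => j _; rewrite formZl.
Qed.

Lemma is_derive_form_r (M : R -> 'M[R]_(p, q)) (t : R) (M' : 'M[R]_(p, q)) u :
  (forall i j, is_derive t 1 (fun s => M s i j) (M' i j)) ->
  is_derive t 1 (fun s => B u (M s)) (B u M').
Proof.
move=> dM; under eq_fun do rewrite B_sym form_expandl.
rewrite B_sym form_expandl; apply: is_derive_sum_fun => i.
apply: is_derive_sum_fun => j.
have := is_derive_mul_fun (dM i j) (is_derive_cst (B (delta_mx i j) u) t 1).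
by rewrite mulr0 addr0.
Qed.

Lemma is_derive_form_sq (M : R -> 'M[R]_(p, q)) (t : R) (M' : 'M[R]_(p, q)) :
  (forall i j, is_derive t 1 (fun s => M s i j) (M' i j)) ->
  is_derive t 1 (fun s => B (M s) (M s)) (2 * B (M t) M').
Proof.
move=> dM; under eq_fun do rewrite form_expandl.
have dMB i j : is_derive t 1 (fun s => M s i j * B (delta_mx i j) (M s))
    (M' i j * B (delta_mx i j) (M t) + M t i j * B (delta_mx i j) M').
  exact: is_derive_mul_fun (dM i j) (is_derive_form_r _ dM).
apply: is_derive_eq.
  by apply: is_derive_sum_fun => i; apply: is_derive_sum_fun => j; exact: dMB.
rewrite mulr_natl mulr2n {1}[B (M t) M']B_sym.
rewrite (form_expandl M' (M t)) (form_expandl (M t) M') -big_split.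
by apply: eq_bigr => i _; rewrite -big_split.
Qed.

End QuadraticFormDerivative.

(* [diag_weighted_form (hh R n ^+ 2) wf rho u v] is convertible to
   [ipf wf u (diagact rho v)]; likewise [ipc] with [(2 * hh R n) ^+ 2]. *)
Definition diag_weighted_form (R : realType) p q (k : R) (w : 'I_q -> R)
    (d u v : 'M[R]_(p, q)) : R :=
  k * \sum_i \sum_j w j * u i j * diagact d v i j.

Section DiagWeightedForm.
Variables (R : realType) (p q : nat) (k : R) (w : 'I_q -> R) (d : 'M[R]_(p, q)).
Local Notation K := (diag_weighted_form k w d).

Lemma diag_weighted_formDl a u v x : K (a *: u + v) x = a * K u x + K v x.
Proof.
rewrite /diag_weighted_form mulrCA -mulrDr; congr (_ * _).
rewrite mulr_sumr -big_split; apply: eq_bigr => i _.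
rewrite mulr_sumr -big_split; apply: eq_bigr => j _.
by rewrite !mxE /=; ring.
Qed.

Lemma diag_weighted_formC u v : K u v = K v u.
Proof.
rewrite /diag_weighted_form; congr (_ * _); apply: eq_bigr => i _.
by apply: eq_bigr => j _; rewrite !mxE; ring.
Qed.

Lemma is_derive_diag_weighted_form_sq (M : R -> 'M[R]_(p, q)) (t : R)
    (M' : 'M[R]_(p, q)) :
  (forall i j, is_derive t 1 (fun s => M s i j) (M' i j)) ->
  is_derive t 1 (fun s => K (M s) (M s)) (2 * K (M t) M').
Proof. exact: (is_derive_form_sq diag_weighted_formDl diag_weighted_formC). Qed.

End DiagWeightedForm.

Lemma is_derive_sym_psd_sq (R : realType) p q (S : 'M[R]_(p, q) -> _ -> R)
    (M : R -> 'M[R]_(p, q)) (t : R) (M' : 'M[R]_(p, q)) :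
  sym_psd_bilinear S ->
  (forall i j, is_derive t 1 (fun s => M s i j) (M' i j)) ->
  is_derive t 1 (fun s => S (M s) (M s)) (2 * S (M t) M').
Proof. by case=> S_lin S_sym _; exact: is_derive_form_sq. Qed.

Lemma ipGf_adjoint (R : realType) n (Rm : 'M[R]_(n, 2 * n)) (g : 'cV[R]_n)
    (d : 'cV[R]_(2 * n)) :
  ipGf (2 *: Rm^T *m g) d = ipGc g (Rm *m d).
Proof.
have dotE m (u v : 'cV[R]_m) : \sum_i u i 0 * v i 0 = (u^T *m v) 0 0.
  by rewrite mxE; apply: eq_bigr => i _; rewrite mxE.
rewrite /ipGf /ipGc !dotE trmx_mul linearZ /= trmxK -scalemxAr -scalemxAl.
by rewrite mulmxA mxE mulrCA mulrA.
Qed.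

Theorem mainTheorem1 (R : realType) (n : nat) (n_gt0 : (0 < n)%N)
  (wf : 'I_(2 * n).+1 -> R) (wc : 'I_n.+1 -> R)
  (wf_pos : forall j, 0 < wf j) (wc_pos : forall j, 0 < wc j)
  (Gf : {linear fineT R n -> fineG R n})
  (Gc : {linear coarseT R n -> coarseG R n})
  (dGf : {linear fineT R n -> 'cV[R]_(2 * n)})
  (dGc : {linear coarseT R n -> 'cV[R]_n})
  (Sf : fineG R n -> fineG R n -> R) (Sc : coarseG R n -> coarseG R n -> R)
  (Sf_ok : sym_psd_bilinear Sf) (Sc_ok : sym_psd_bilinear Sc)
  (SBPf : forall (u : fineG R n) (vt : fineT R n),
     ipf wf u (Gf vt) = - Sf u (resf vt) - ipGf (gammaf u) (dGf vt))
  (SBPc : forall (u : coarseG R n) (vt : coarseT R n),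
     ipc wc u (Gc vt) = - Sc u (resc vt) + ipGc (gammac u) (dGc vt))
  (rhof : fineG R n) (rhoc : coarseG R n)
  (rhof_pos : forall i j, 0 < rhof i j) (rhoc_pos : forall i j, 0 < rhoc i j)
  (P : 'M[R]_(2 * n, n)) (Rm : 'M[R]_(n, 2 * n))
  (ft : R -> fineT R n) (ct : R -> coarseT R n)
  (ft_smooth : twice_diff ft) (ct_smooth : twice_diff ct)
  (eqf : forall t, diagact rhof (dmx (dmx (fun s => resf (ft s))) t) = Gf (ft t))
  (eqc : forall t, diagact rhoc (dmx (dmx (fun s => resc (ct s))) t) = Gc (ct t))
  (ifc1 : forall t, gammaf (resf (ft t)) = P *m gammac (resc (ct t)))
  (ifc2 : forall t, dGc (ct t) = Rm *m dGf (ft t))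
  (compat : P = 2 *: Rm^T) :
  let f := fun s => resf (ft s) in
  let c := fun s => resc (ct s) in
  let E := fun s =>
    ipf wf (dmx f s) (diagact rhof (dmx f s)) + Sf (f s) (f s)
    + ipc wc (dmx c s) (diagact rhoc (dmx c s)) + Sc (c s) (c s) in
  forall t : R, derivable E t 1 /\ derive1 E t = 0.
Proof.
move=> f c E t.
have f2 := twice_diff_resf ft_smooth; have c2 := twice_diff_resc ct_smooth.
have dE : is_derive t 1 E
    (2 * (ipf wf (dmx f t) (Gf (ft t)) + Sf (f t) (dmx f t))
     + 2 * (ipc wc (dmx c t) (Gc (ct t)) + Sc (c t) (dmx c t))).
  apply: is_derive_eq (is_deriveD (is_deriveD (is_deriveD
    (is_derive_diag_weighted_form_sq _ _ _ (twice_diff_is_derive_dmx f2 t))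
    (is_derive_sym_psd_sq Sf_ok (twice_diff_is_derive f2 t)))
    (is_derive_diag_weighted_form_sq _ _ _ (twice_diff_is_derive_dmx c2 t)))
    (is_derive_sym_psd_sq Sc_ok (twice_diff_is_derive c2 t))) _.
  by rewrite -eqf -eqc !mulrDr !addrA.
have [_ Sf_sym _] := Sf_ok; have [_ Sc_sym _] := Sc_ok.
have fine_rate : ipf wf (dmx f t) (Gf (ft t)) + Sf (f t) (dmx f t)
    = - ipGf (gammaf (dmx f t)) (dGf (ft t)).
  by rewrite SBPf Sf_sym addrAC addNr add0r.
have coarse_rate : ipc wc (dmx c t) (Gc (ct t)) + Sc (c t) (dmx c t)
    = ipGc (gammac (dmx c t)) (dGc (ct t)).
  by rewrite SBPc Sc_sym addrAC addNr add0r.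
split; first exact: ex_derive.
rewrite derive1E derive_val fine_rate coarse_rate (dmx_interface _ ifc1 c2).
by rewrite ifc2 compat ipGf_adjoint mulrN addNr.
Qed.
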